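(* Let $G=(V,E)$ be a graph, let $k$ be a nonnegative integer, and let $\mathcal{M}$ be a nontrivial, unbounded graph matroid family with rank function $r$, dimensionality $d$, and threshold $t$. If $G$ is $k$-connected, $k$-vertex-redundantly $\mathcal{M}$-rigid, and has at least $k+t$ vertices, then $\mathcal{M}(G)$ is vertically $(k+1)$-connected.
   Context: All graphs are finite and simple and have no isolated vertices. A graph matroid family $\mathcal{M}$ assigns to every graph $G$ a matroid $\mathcal{M}(G)$ on $E(G)$ such that (i) every graph isomorphism $V(G)\to V(H)$ induces an isomorphism $\mathcal{M}(G)\to\mathcal{M}(H)$, and (ii) for every subgraph $H$ of $G$, $\mathcal{M}(H)$ is the restriction of $\mathcal{M}(G)$ to $E(H)$. $r(G)$ is the rank of $\mathcal{M}(G)$. $G$ is $\mathcal{M}$-rigid if $r(G)=r(K_{V(G)})$; it is $k$-vertex-redundantly $\mathcal{M}$-rigid if it is $\mathcal{M}$-rigid and remains so after deleting any set of at most $k$ vertices. $\mathcal{M}$ is nontrivial if some graph $G$ has $r(G)<|E(G)|$, unbounded if $r(K_n)$ is unbounded. An $\mathcal{M}$-circuit is a graph $C$ with $r(C)<|E(C)|$ and $r(C-e)=|E(C)|-1$ for all edges $e$. Dimensionality $d$: minimum over $\mathcal{M}$-circuits of (minimum degree $-1$); threshold $t$: minimum of $|V(C)|-1$ over $\mathcal{M}$-circuits $C$ of minimum degree $d+1$. For a matroid with rank function $r$ on ground set $E$ and positive integer $k$, a bipartition $(E_1,E_2)$ of $E$ is a vertical $k$-separation if $r(E_1),r(E_2)\ge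 k$ and $r(E_1)+r(E_2)\le r(E)+k-1$; the matroid is vertically $k$-connected if its rank is at least $k$ and it has no vertical $k'$-separation for any positive integer $k'<k$. *)

From mathcomp Require Import all_boot all_order finmap.
Set Implicit Arguments. Unset Strict Implicit. Unset Printing Implicit Defensive.
Local Open Scope fset_scope.

(* Vertices are natural numbers; an edge {u,v} (u <> v) is encoded as the
   ordered pair (u,v) with u < v.  A graph (without isolated vertices) is a
   finite set of such edges; its vertex set is the set of endpoints. *)
Definition edge := (nat * nat)%type.
Definition graph := {fset edge}.

Definition wf_graph (G : graph) : Prop := forall e, e \in G -> e.1 < e.2.

Definition verts (G : graph) : {fset nat} :=
  [fset e.1 | e in G] `|` [fset e.2 | e in G].

Definition mkedge (u v : nat) : edge := (minn u v, maxn u v).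

Definition complete (V : {fset nat}) : graph :=
  [fset mkedge u v | u in V, v in V & u < v].

Definition Kn (n : nat) : graph := complete [fset i in iota 0 n].

Definition emap (f : nat -> nat) (e : edge) : edge := mkedge (f e.1) (f e.2).
Definition gmap (f : nat -> nat) (G : graph) : graph := [fset emap f e | e in G].

Definition deg (G : graph) (v : nat) : nat :=
  #|` [fset e in G | (e.1 == v) || (e.2 == v)] |.
Definition mindeg_ge (G : graph) (m : nat) : Prop :=
  forall v, v \in verts G -> m <= deg G v.
Definition has_mindeg (G : graph) (m : nat) : Prop :=
  mindeg_ge G m /\ exists2 v, v \in verts G & deg G v = m.

(* A graph matroid family.  mrk G X is the rank, in the matroid M(G) on E(G),
   of a subset X of E(G).  Values outside these arguments are irrelevant. *)
Record graph_matroid_family := GMF {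
  mrk : graph -> graph -> nat;
  mrk_le_card : forall G X, wf_graph G -> X `<=` G -> mrk G X <= #|` X |;
  mrk_mono : forall G X Y, wf_graph G -> X `<=` Y -> Y `<=` G ->
    mrk G X <= mrk G Y;
  mrk_submod : forall G X Y, wf_graph G -> X `<=` G -> Y `<=` G ->
    mrk G (X `|` Y) + mrk G (X `&` Y) <= mrk G X + mrk G Y;
  mrk_iso : forall (f : nat -> nat) G X, injective f -> wf_graph G ->
    X `<=` G -> mrk (gmap f G) (gmap f X) = mrk G X;
  mrk_restr : forall G H X, wf_graph G -> H `<=` G -> X `<=` H ->
    mrk H X = mrk G X
}.

Section Fam.
Variable M : graph_matroid_family.

Definition r (G : graph) : nat := mrk M G G.

Definition nontrivial : Prop := exists G, wf_graph G /\ r G < #|` G |.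
Definition unbounded : Prop := forall m, exists n, m <= r (Kn n).

Definition is_circuit (C : graph) : Prop :=
  wf_graph C /\ r C < #|` C | /\
  forall e, e \in C -> r (C `\ e) = (#|` C |).-1.

(* dimensionality d: minimum over circuits of (minimum degree - 1) *)
Definition is_dimensionality (d : nat) : Prop :=
  (exists C, is_circuit C /\ has_mindeg C d.+1) /\
  (forall C, is_circuit C -> mindeg_ge C d.+1).

(* threshold t: minimum of |V(C)| - 1 over circuits of minimum degree d+1 *)
Definition is_threshold (d t : nat) : Prop :=
  (exists C, [/\ is_circuit C, has_mindeg C d.+1 & (#|` verts C |).-1 = t]) /\
  (forall C, is_circuit C -> has_mindeg C d.+1 -> t <= (#|` verts C |).-1).

(* Rigidity of a graph with explicit vertex set V and edge set E (E within V);
   needed for G - X, which may contain isolated vertices. *)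
Definition rigid_on (V : {fset nat}) (E : graph) : Prop := r E = r (complete V).
Definition rigid (G : graph) : Prop := rigid_on (verts G) G.

End Fam.

(* deletion of a vertex set X: edge set of G - X (vertex set is verts G `\` X) *)
Definition del (G : graph) (X : {fset nat}) : graph :=
  [fset e in G | (e.1 \notin X) && (e.2 \notin X)].

Definition connected_on (V : {fset nat}) (E : graph) : Prop :=
  forall u v, u \in V -> v \in V ->
    exists p : seq nat, path (fun a b => mkedge a b \in E) u p && (last u p == v).

Definition k_connected (G : graph) (k : nat) : Prop :=
  k < #|` verts G | /\
  forall X : {fset nat}, X `<=` verts G -> #|` X | < k ->
    connected_on (verts G `\` X) (del G X).

Definition vredundantly_rigid (M : graph_matroid_family) (G : graph) (k : nat) : Prop :=
  rigid M G /\
  forall X : {fset nat}, X `<=` verts G -> #|` X | <= k ->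
    rigid_on M (verts G `\` X) (del G X).

Definition vertical_sep (M : graph_matroid_family) (G : graph) (k : nat) (E1 E2 : graph) : Prop :=
  [/\ E1 `|` E2 = G, E1 `&` E2 = fset0,
      k <= mrk M G E1, k <= mrk M G E2 &
      mrk M G E1 + mrk M G E2 <= mrk M G G + k - 1].

Definition vertically_connected (M : graph_matroid_family) (G : graph) (k : nat) : Prop :=
  k <= mrk M G G /\
  forall k', 0 < k' -> k' < k -> forall E1 E2, ~ vertical_sep M G k' E1 E2.

From mathcomp Require Import all_boot all_order finmap zify.
Set Implicit Arguments. Unset Strict Implicit. Unset Printing Implicit Defensive.

(* Induction on k, the case k = 0 being submodularity.  For the step, take a
   bipartition (A, B) of E(G); by connectivity some vertex z has edges in both A
   and B, and G - z satisfies the hypotheses for k - 1.  Rigidity of G and of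
   G - z gives r(G) = r(G - z) + d, because adding a vertex to a complete graph on
   at least t vertices raises the rank by exactly d: any d edges at the new vertex
   add d to the rank (an edge at a vertex of degree at most d lies in no circuit,
   circuits having minimum degree d + 1), and a copy of a circuit on t + 1
   vertices with a vertex of degree d + 1 puts every further edge at the new
   vertex into the span of the complete graph and d such edges.  Deleting z
   lowers r(A) by at least min(d, deg_A z) and r(B) by at least min(d, deg_B z),
   while vertex redundancy forces deg z >= d + k; so A and B together lose more
   than d, which pays for the extra unit in min(k, r(A), r(B)).  Finally d > 0,
   since for d = 0 the rank of K_n would stop growing at n = t. *)

Local Open Scope fset_scope.
(* [fset_scope] reads [+] as concatenation of finite maps. *)
Local Open Scope nat_scope.

Lemma exists_fsubset_card (T : choiceType) (A : {fset T}) m :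
  m <= #|`A| -> exists2 B, B `<=` A & #|`B| = m.
Proof.
move=> hm; exists [fset x in take m (enum_fset A)].
  by apply/fsubsetP => x; rewrite in_fset => /mem_take.
rewrite card_fseq undup_id ?take_uniq ?fset_uniq // size_take.
by move: hm; rewrite leq_eqVlt => /orP[/eqP->|->]; rewrite ?ltnn.
Qed.

Lemma exists_inj_extension (s u : seq nat) : uniq s -> uniq u -> size s <= size u ->
  exists2 f : nat -> nat, injective f & map f s = take (size s) u.
Proof.
move=> us uu su.
(* Off [s], [f] shifts past every element of [u]. *)
pose b := (\max_(i <- u) i).+1.
have ub j : j < size u -> nth 0 u j < b.
  by move=> /(mem_nth 0) ju; rewrite ltnS; exact: (@leq_bigmax_seq _ u xpredT id _ ju).
have ius x : x \in s -> index x s < size u by move=> xs; rewrite (leq_trans _ su) ?index_mem.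
exists (fun x => if x \in s then nth 0 u (index x s) else x + b).
  move=> x y; case: ifP => xs; case: ifP => ys.
  - move=> /eqP; rewrite nth_uniq ?ius // => /eqP E.
    by rewrite -(nth_index 0 xs) E nth_index.
  - by have := ub _ (ius _ xs); lia.
  - by have := ub _ (ius _ ys); lia.
  - lia.
apply: (@eq_from_nth _ 0); first by rewrite size_map size_take_min; lia.
move=> i; rewrite size_map => lti.
by rewrite (nth_map 0) // mem_nth // index_uniq // nth_take.
Qed.

(** * Edges, stars and vertex deletion *)

Definition incident (e : edge) (u : nat) : bool := (e.1 == u) || (e.2 == u).
Definition star (G : graph) (u : nat) : graph := [fset e in G | incident e u].
Definition other_end (u : nat) (e : edge) : nat := if e.1 == u then e.2 else e.1.

Lemma mem_star G u e : (e \in star G u) = (e \in G) && incident e u.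
Proof. by rewrite inE. Qed.

Lemma star_sub G u : star G u `<=` G.
Proof. exact: fset_sub. Qed.

Lemma card_star G u : #|` star G u| = deg G u.
Proof. by []. Qed.

Lemma deg_mono X Y u : X `<=` Y -> deg X u <= deg Y u.
Proof.
move=> /fsubsetP sXY; apply: fsubset_leq_card; apply/fsubsetP => e.
by rewrite !inE => /andP[/sXY -> ->].
Qed.

Lemma incident1 (e : edge) : incident e e.1.
Proof. by rewrite /incident eqxx. Qed.

Lemma mkedgeC u v : mkedge u v = mkedge v u.
Proof. by rewrite /mkedge minnC maxnC. Qed.

Lemma incident_mkedgel u v : incident (mkedge u v) u.
Proof.
rewrite /incident /mkedge /=.
by case: (leqP u v) => h; apply/orP; [left|right]; apply/eqP; lia.
Qed.

Lemma incident_mkedger u v : incident (mkedge u v) v.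
Proof. by rewrite mkedgeC incident_mkedgel. Qed.

Lemma wf_graph_sub X Y : wf_graph Y -> X `<=` Y -> wf_graph X.
Proof. by move=> wY /fsubsetP sXY e /sXY /wY. Qed.

Lemma wf_graphU X Y : wf_graph X -> wf_graph Y -> wf_graph (X `|` Y).
Proof. by move=> wX wY e; rewrite in_fsetU => /orP[/wX|/wY]. Qed.

Lemma vertsP G u : reflect (exists2 e, e \in G & incident e u) (u \in verts G).
Proof.
apply: (iffP idP).
  by rewrite in_fsetU => /orP[]/imfsetP[e eG ->]; exists e; rewrite // /incident eqxx ?orbT.
by case=> e eG /orP[]/eqP<-; rewrite in_fsetU; apply/orP; [left|right]; apply/imfsetP; exists e.
Qed.

Lemma verts_incident G e u : e \in G -> incident e u -> u \in verts G.
Proof. by move=> eG eu; apply/vertsP; exists e. Qed.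

Lemma mkedgeE (e : edge) : e.1 < e.2 -> mkedge e.1 e.2 = e.
Proof. by case: e => x y /= h; rewrite /mkedge; congr pair; lia. Qed.

Lemma mkedge_eq u v u' v' : mkedge u v = mkedge u' v' ->
  (u = u' /\ v = v') \/ (u = v' /\ v = u').
Proof. by rewrite /mkedge => -[]; lia. Qed.

Lemma incident_edge_eq (e : edge) u v : e.1 < e.2 ->
  incident e u -> incident e v -> u != v -> e = mkedge u v.
Proof.
move=> lt eu ev uv; rewrite -(mkedgeE lt).
by move: eu ev uv; rewrite /incident => /orP[]/eqP<- /orP[]/eqP<-; rewrite ?eqxx // mkedgeC.
Qed.

Lemma incident_other_end (e : edge) u : e.1 < e.2 -> incident e u ->
  incident e (other_end u e) /\ other_end u e != u.
Proof.
case: e => a b /= lt; rewrite /incident /other_end /=.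
by case: (eqVneq a u) => [<-|au] /= hu; rewrite eqxx ?orbT; split; rewrite // gtn_eqF.
Qed.

Lemma mkedge_other_end (e : edge) u : e.1 < e.2 -> incident e u ->
  e = mkedge u (other_end u e).
Proof.
move=> lt eu; have [eo ou] := incident_other_end lt eu.
by apply: incident_edge_eq; rewrite // eq_sym.
Qed.

Lemma mem_complete V e : (e \in complete V) = [&& e.1 \in V, e.2 \in V & e.1 < e.2].
Proof.
apply/imfset2P/idP.
  move=> [u uV [v]]; rewrite !inE /= => /andP[vV uv] ->.
  by rewrite /mkedge /minn /maxn uv /= uV vV uv.
move=> /and3P[h1 h2 h3]; exists e.1 => //; exists e.2; first by rewrite !inE /= h2 h3.
by rewrite mkedgeE.
Qed.

Lemma wf_complete V : wf_graph (complete V).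
Proof. by move=> e; rewrite mem_complete => /and3P[]. Qed.

Lemma mkedge_complete V u v : u \in V -> v \in V -> u != v -> mkedge u v \in complete V.
Proof.
move=> uV vV uv; rewrite mem_complete /mkedge /minn /maxn.
by case: ltngtP uv => h /=; rewrite ?uV ?vV ?h ?eqxx.
Qed.

Lemma complete_sub V W : V `<=` W -> complete V `<=` complete W.
Proof.
move=> /fsubsetP s; apply/fsubsetP => e; rewrite !mem_complete => /and3P[a b ->].
by rewrite (s _ a) (s _ b).
Qed.

Lemma verts_complete V : verts (complete V) `<=` V.
Proof.
by apply/fsubsetP => u /vertsP[e]; rewrite mem_complete => /and3P[a b _] /orP[]/eqP<-.
Qed.

Lemma emap_incident f (e : edge) u : incident e u ->
  emap f e = mkedge (f u) (f (other_end u e)).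
Proof.
rewrite /incident /emap /other_end => /orP[/eqP->|/eqP E]; rewrite ?eqxx //.
by case: eqP => [->|_]; rewrite E // mkedgeC.
Qed.

Lemma emap_inj f e e' : injective f -> e.1 < e.2 -> e'.1 < e'.2 ->
  emap f e = emap f e' -> e = e'.
Proof.
move=> fi; case: e => a b; case: e' => a' b' /= h h'; rewrite /emap /=.
by move=> /mkedge_eq[[/fi ea /fi eb]|[/fi ea /fi eb]]; subst => //; lia.
Qed.

Lemma mem_del G X e : (e \in del G X) = [&& e \in G, e.1 \notin X & e.2 \notin X].
Proof. by rewrite inE. Qed.

Lemma del_sub G X : del G X `<=` G.
Proof. by apply/fsubsetP => e; rewrite mem_del => /andP[]. Qed.

Lemma del0 G : del G fset0 = G.
Proof. by apply/fsetP => e; rewrite mem_del !in_fset0 andbT. Qed.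

Lemma del_del1 G z X : del (del G [fset z]) X = del G (z |` X).
Proof.
apply/fsetP => e; rewrite !mem_del !in_fset1U !in_fset1 !negb_or.
by case: (e \in G); case: (e.1 == z); case: (e.2 == z); case: (e.1 \in X); case: (e.2 \in X).
Qed.

Lemma verts_del G X : verts (del G X) `<=` verts G `\` X.
Proof.
apply/fsubsetP => u /vertsP[e]; rewrite mem_del => /and3P[eG e1 e2] eu.
by rewrite in_fsetD (verts_incident eG eu) andbT; case/orP: eu => /eqP<-.
Qed.

Lemma verts_del1 G z : wf_graph G -> (forall u, u \in verts G -> 1 < deg G u) ->
  verts (del G [fset z]) = verts G `\ z.
Proof.
move=> wG deg2; apply/eqP; rewrite eqEfsubset verts_del /=.
apply/fsubsetP => u; rewrite in_fsetD1 => /andP[uz uV].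
have : ~~ (star G u `<=` [fset mkedge u z]).
  by apply/negP => /fsubset_leq_card; rewrite cardfs1 card_star; have := deg2 u uV; lia.
move=> /fsubsetPn[e]; rewrite mem_star => /andP[eG eu] ne.
have ez : ~~ incident e z.
  by apply/negP => ez; move: ne; rewrite (incident_edge_eq (wG e eG) eu ez uz) fset11.
apply/vertsP; exists e => //; rewrite mem_del eG !in_fset1.
by move: ez; rewrite /incident negb_or.
Qed.

Lemma del_fsetD G A X : del (G `\` A) X = del G X `\` del A X.
Proof.
apply/fsetP => e; rewrite in_fsetD !mem_del in_fsetD.
by case: (e \in A); case: (e \in G); case: (e.1 \in X); case: (e.2 \in X).
Qed.

Lemma del1_fsetU_star G z : del G [fset z] `|` star G z = G.
Proof.
apply/fsetP => e; rewrite in_fsetU mem_del mem_star !in_fset1 /incident.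
by case: (e \in G); case: (e.1 == z); case: (e.2 == z).
Qed.

Lemma notin_verts_del1 G z : z \notin verts (del G [fset z]).
Proof. by apply/negP => /(fsubsetP (verts_del _ _)); rewrite in_fsetD in_fset1 eqxx. Qed.

Lemma deg_le_split G A z : deg G z <= deg A z + deg (G `\` A) z.
Proof.
rewrite -!card_star -cardfsUI; apply: leq_trans (leq_addr _ _); apply: fsubset_leq_card.
apply/fsubsetP => e; rewrite in_fsetU !mem_star in_fsetD => /andP[-> ->].
by case: (e \in A).
Qed.

Lemma del_fsubset A G X : A `<=` G -> del A X `<=` del G X.
Proof. by move=> /fsubsetP sAG; apply/fsubsetP => e; rewrite !mem_del => /andP[/sAG-> ->]. Qed.

Lemma deg_gt0P G u : reflect (exists2 e, e \in G & incident e u) (0 < deg G u).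
Proof.
rewrite -card_star cardfs_gt0; apply: (iffP (fset0Pn _)) => [[e]|[e eG eu]].
  by rewrite mem_star => /andP[]; exists e.
by exists e; rewrite mem_star eG.
Qed.

(** * Rank functions and circuits *)

Section Rank.
Variable M : graph_matroid_family.
Notation rk := (r M).

Definition coloop (X : graph) (e : edge) : bool := rk (X `\ e) < rk X.

Lemma r_restr X Y : wf_graph Y -> X `<=` Y -> rk X = mrk M Y X.
Proof. by move=> wY sXY; rewrite /r (mrk_restr M wY sXY) ?fsubset_refl. Qed.

Lemma r_le_card X : wf_graph X -> rk X <= #|`X|.
Proof. by move=> wX; apply: mrk_le_card => //; apply: fsubset_refl. Qed.

Lemma r_mono X Y : wf_graph Y -> X `<=` Y -> rk X <= rk Y.
Proof.
by move=> wY sXY; rewrite (r_restr wY sXY) /r; apply: mrk_mono; rewrite ?fsubset_refl.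
Qed.

Lemma r_submod X Y : wf_graph X -> wf_graph Y ->
  rk (X `|` Y) + rk (X `&` Y) <= rk X + rk Y.
Proof.
move=> wX wY; have wU := wf_graphU wX wY.
have sIU : X `&` Y `<=` X `|` Y := fsubset_trans (fsubsetIl _ _) (fsubsetUl _ _).
rewrite (r_restr wU (fsubset_refl _)) (r_restr wU (fsubsetUl X Y)).
rewrite (r_restr wU (fsubsetUr X Y)) (r_restr wU sIU).
by apply: mrk_submod; rewrite ?fsubsetUl ?fsubsetUr.
Qed.

Lemma r_fset0 : rk fset0 = 0.
Proof.
have w0 : wf_graph fset0 by move=> e; rewrite in_fset0.
by apply/eqP; rewrite -leqn0 -(cardfs0 edge); apply: r_le_card.
Qed.

Lemma r_subadd X Y : wf_graph X -> wf_graph Y -> rk (X `|` Y) <= rk X + rk Y.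
Proof. by move=> wX wY; have := r_submod wX wY; lia. Qed.

Lemma r_fsetU_le_card X Y : wf_graph X -> wf_graph Y -> rk (X `|` Y) <= rk X + #|`Y|.
Proof. by move=> wX wY; have := r_subadd wX wY; have := r_le_card wY; lia. Qed.

Lemma r_fsetD1 X e : wf_graph X -> rk X <= (rk (X `\ e)).+1.
Proof.
move=> wX; case eX: (e \in X); last by rewrite (fsetDidPl _ _ _) // fdisjointX1 eX.
have w1 : wf_graph (X `\ e) := wf_graph_sub wX (fsubD1set _ _).
have w2 : wf_graph [fset e] by apply: wf_graph_sub wX _; rewrite fsub1set.
by have := r_fsetU_le_card w1 w2; rewrite cardfs1 fsetUC fsetD1K //; lia.
Qed.

Lemma coloopE X e : wf_graph X -> coloop X e = (rk X == (rk (X `\ e)).+1).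
Proof.
move=> wX; rewrite /coloop; have := r_fsetD1 e wX.
by have := r_mono wX (fsubD1set X e); lia.
Qed.

Lemma r_le_add_fsetD G A : wf_graph G -> A `<=` G -> rk G <= rk A + rk (G `\` A).
Proof.
move=> wG sA; have := r_submod (wf_graph_sub wG sA) (wf_graph_sub wG (fsubsetDl G A)).
rewrite fsetUDl fsetDv fsetD0 (fsetUidPr _ _ sA) (_ : _ `&` _ = fset0) ?r_fset0 ?addn0 //.
by apply/eqP; rewrite fsetI_eq0; apply/fdisjointP => e eA; rewrite in_fsetD eA.
Qed.

Lemma r_spanned_mono Y Z e : wf_graph (e |` Z) -> Y `<=` Z ->
  rk (e |` Y) = rk Y -> rk (e |` Z) = rk Z.
Proof.
move=> w sYZ h.
have wZ : wf_graph Z := wf_graph_sub w (fsubsetU1 _ _).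
have := r_submod wZ (wf_graph_sub w (fsetUS _ sYZ)).
rewrite fsetUCA (fsetUidPl _ _ sYZ).
have : rk Y <= rk (Z `&` (e |` Y)).
  by apply: r_mono (wf_graph_sub wZ (fsubsetIl _ _)) _; rewrite fsubsetI sYZ fsubsetU1.
by have := r_mono w (fsubsetU1 e Z); lia.
Qed.

Lemma r_spanned_fsetU Y F : wf_graph (Y `|` F) ->
  (forall f, f \in F -> rk (f |` Y) = rk Y) -> rk (Y `|` F) = rk Y.
Proof.
elim/fset1U_rect: F => [|x F xF IH] w h; first by rewrite fsetU0.
rewrite fsetUCA in w *.
have IH' : rk (Y `|` F) = rk Y.
  by apply: IH => [|f fF]; [apply: wf_graph_sub w (fsubsetU1 _ _) | apply: h; rewrite fset1Ur].
by rewrite (r_spanned_mono w (fsubsetUl _ _)) // h // fset1U1.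
Qed.

Lemma indep_sub I S : wf_graph I -> rk I = #|`I| -> S `<=` I -> rk S = #|`S|.
Proof.
move=> wI hI sSI; have wS := wf_graph_sub wI sSI.
have := r_fsetU_le_card wS (wf_graph_sub wI (fsubsetDl I S)).
rewrite fsetUDl fsetDv fsetD0 (fsetUidPr _ _ sSI) cardfsDS //.
by have := fsubset_leq_card sSI; have := r_le_card wS; lia.
Qed.

Lemma indep_coloops Y : wf_graph Y -> {in Y, forall f, coloop Y f} -> rk Y = #|`Y|.
Proof.
move: {2}#|`Y| (erefl #|`Y|) => n; elim: n Y => [|n IH] Y hc wY h.
  by move/cardfs0_eq: hc => ->; rewrite r_fset0 cardfs0.
have [Y0|[f fY]] := fset_0Vmem Y; first by rewrite Y0 cardfs0 in hc.
have wYf : wf_graph (Y `\ f) := wf_graph_sub wY (fsubD1set _ _).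
have cY : #|`Y| = (#|`Y `\ f|).+1 by rewrite (cardfsD1 f Y) fY.
suff : rk (Y `\ f) = #|`Y `\ f| by have := h f fY; rewrite coloopE // => /eqP->->.
apply: (IH _ _ wYf) => [|g]; first by lia.
rewrite in_fsetD1 => /andP[gf gY]; have := h g gY.
have := r_submod wYf (wf_graph_sub wY (fsubD1set Y g)).
have -> : (Y `\ f) `|` (Y `\ g) = Y.
  apply/fsetP => x; rewrite !inE; case: (eqVneq x f) => [->|xf] /=; first by rewrite eq_sym gf.
  by case: (x \in Y); case: (x == g).
have -> : (Y `\ f) `&` (Y `\ g) = (Y `\ f) `\ g.
  by apply/fsetP => x; rewrite !inE; do 2 case: (_ == _) => //=; case: (x \in Y).
by rewrite /coloop; have := r_fsetD1 g wYf; lia.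
Qed.

End Rank.

Lemma fsetD1C (T : choiceType) (A : {fset T}) a b : A `\ a `\ b = A `\ b `\ a.
Proof. by apply/fsetP => x; rewrite !inE; do 2 case: (_ == _). Qed.

Section Circuits.
Variable M : graph_matroid_family.
Notation rk := (r M).

Lemma circuit_of_minimal D e : wf_graph D -> e \in D -> ~~ coloop M D e ->
  (forall f, f \in D -> f != e -> coloop M (D `\ f) e) -> is_circuit M D.
Proof.
move=> wD eD eD_span min; rewrite /coloop -leqNgt in eD_span.
have wDe : wf_graph (D `\ e) := wf_graph_sub wD (fsubD1set _ _).
have cD : #|`D| = (#|`D `\ e|).+1 by rewrite (cardfsD1 e D) eD.
have indep : rk (D `\ e) = #|`D `\ e|.
  apply: indep_coloops wDe _ => f; rewrite in_fsetD1 => /andP[fe fD].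
  have := min f fD fe; rewrite /coloop fsetD1C.
  by have := r_mono M wD (fsubD1set D f); lia.
split=> //; split; first by lia.
move=> f fD; case: (eqVneq f e) => [->|fe]; first by rewrite indep cD.
have wDf : wf_graph (D `\ f) := wf_graph_sub wD (fsubD1set _ _).
have := min f fD fe; rewrite coloopE // => /eqP->.
rewrite (indep_sub wDe indep); last by rewrite fsetD1C fsubD1set.
by rewrite cD fsetD1C (cardfsD1 f (D `\ e)) in_fsetD1 fe fD.
Qed.

Lemma exists_circuit_through X e : wf_graph X -> e \in X -> ~~ coloop M X e ->
  exists C, [/\ is_circuit M C, C `<=` X & e \in C].
Proof.
move: {2}#|`X| (leqnn #|`X|) => n; elim: n X => [|n IH] X.
  by rewrite leqn0 cardfs_eq0 => /eqP-> _; rewrite in_fset0.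
move=> cX wX eX eX_span.
have [[f fX /andP[fe f_span]] | min] :=
  altP (@hasP _ (fun f => (f != e) && ~~ coloop M (X `\ f) e) (enum_fset X)).
  have cXf : #|`X `\ f| <= n by move: cX; rewrite (cardfsD1 f X) fX.
  have wXf : wf_graph (X `\ f) := wf_graph_sub wX (fsubD1set _ _).
  have eXf : e \in X `\ f by rewrite in_fsetD1 eq_sym fe eX.
  have [C [cC sC eC]] := IH _ cXf wXf eXf f_span.
  by exists C; split; rewrite // (fsubset_trans sC (fsubD1set _ _)).
exists X; split; rewrite ?fsubset_refl //.
apply: (circuit_of_minimal wX eX eX_span) => f fX fe.
by move/hasPn: min => /(_ f fX); rewrite fe /= negbK.
Qed.

Variable d : nat.
Hypothesis circuit_mindeg : forall C, is_circuit M C -> mindeg_ge C d.+1.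

Lemma coloop_low_deg X e u : wf_graph X -> e \in X -> incident e u -> deg X u <= d ->
  coloop M X e.
Proof.
move=> wX eX eu hd; apply/negPn/negP => /(exists_circuit_through wX eX)[C [cC sCX eC]].
by have := circuit_mindeg cC (verts_incident eC eu); have := deg_mono u sCX; lia.
Qed.

Lemma r_add_low_deg H F : wf_graph (H `|` F) -> [disjoint H & F] ->
  (forall e, e \in F -> exists2 u, incident e u & deg (H `|` F) u <= d) ->
  rk (H `|` F) = rk H + #|`F|.
Proof.
elim/fset1U_rect: F => [|x F xF IH] w dj low; first by rewrite fsetU0 cardfs0 addn0.
rewrite fdisjointXU fdisjointX1 in dj; case/andP: dj => xH dj.
rewrite fsetUCA in w low *; rewrite cardfsU1 xF.
have [u xu du] := low x (fset1U1 _ _).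
have := coloop_low_deg w (fset1U1 _ _) xu du.
rewrite coloopE // fsetU1K ?in_fsetU ?negb_or ?xH // => /eqP->.
rewrite IH //; first by lia.
- exact: wf_graph_sub w (fsubsetU1 _ _).
- move=> e eF; have [v ev dv] := low e (fset1Ur _ eF).
  by exists v => //; apply: leq_trans dv; apply: deg_mono; apply: fsubsetU1.
Qed.

Lemma r_add_star H S z : wf_graph (H `|` S) -> z \notin verts H ->
  (forall e, e \in S -> incident e z) -> rk H + minn d #|`S| <= rk (H `|` S).
Proof.
move=> w zH Sz.
have [S' sS' cS'] := exists_fsubset_card (geq_minr d #|`S|).
have w' : wf_graph (H `|` S') := wf_graph_sub w (fsetUS _ sS').
have S'z e : e \in S' -> incident e z by move=> /(fsubsetP sS'); apply: Sz.
have dj : [disjoint H & S'].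
  by apply/fdisjointP => e eH; apply/negP => /S'z ez; case/negP: zH; apply: verts_incident ez.
rewrite -cS' -(r_add_low_deg w' dj); first exact: r_mono w (fsetUS _ sS').
move=> e eS'; exists z; first exact: S'z.
apply: leq_trans (_ : #|`S'| <= d); last by rewrite cS' geq_minl.
apply: fsubset_leq_card; apply/fsubsetP => f.
rewrite !inE /= => /andP[/orP[fH|//] fz].
by case/negP: zH; apply: verts_incident fH fz.
Qed.

Lemma r_del1_star X z : wf_graph X -> rk (del X [fset z]) + minn d (deg X z) <= rk X.
Proof.
move=> wX; rewrite -card_star; have := @r_add_star (del X [fset z]) (star X z) z.
rewrite del1_fsetU_star; apply=> //; first exact: notin_verts_del1.
by move=> e; rewrite mem_star => /andP[].
Qed.

Hypothesis d_gt0 : 0 < d.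

Lemma star_indep S z : wf_graph S -> (forall e, e \in S -> incident e z) -> rk S = #|`S|.
Proof.
move=> wS Sz; rewrite -[S]fset0U (r_add_low_deg _ (fdisjoint0X _)) ?r_fset0 ?fset0U // => e eS.
have [eo oz] := incident_other_end (wS e eS) (Sz e eS).
exists (other_end z e) => //; apply: leq_trans d_gt0.
rewrite -card_star -(cardfs1 e); apply: fsubset_leq_card; apply/fsubsetP => f.
rewrite mem_star in_fset1 => /andP[fS fo]; apply/eqP.
rewrite (incident_edge_eq (wS f fS) fo (Sz f fS) oz).
exact/esym/(incident_edge_eq (wS e eS) eo (Sz e eS) oz).
Qed.

Lemma r_ge_deg X z : wf_graph X -> deg X z <= rk X.
Proof.
move=> wX; have Sz e : e \in star X z -> incident e z by rewrite mem_star => /andP[].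
rewrite -card_star -(star_indep (wf_graph_sub wX (star_sub X z)) Sz).
exact (r_mono M wX (star_sub X z)).
Qed.

End Circuits.

(** * Adding a vertex to a complete graph *)

Definition neighbours (G : graph) (u : nat) : {fset nat} := [fset other_end u e | e in star G u].

Definition fan (z : nat) (P : {fset nat}) : graph := [fset mkedge z p | p in P].

Lemma neighbours_sub G u : wf_graph G -> neighbours G u `<=` verts G `\ u.
Proof.
move=> wG; apply/fsubsetP => x /imfsetP[e]; rewrite mem_star => /andP[eG eu] ->.
have [eo ou] := incident_other_end (wG e eG) eu.
by rewrite in_fsetD1 ou (verts_incident eG eo).
Qed.

Lemma card_neighbours G u : wf_graph G -> #|` neighbours G u| = deg G u.
Proof.
move=> wG; rewrite card_in_imfset // => e f; rewrite !mem_star => /andP[eG eu] /andP[fG fu] E.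
by rewrite (mkedge_other_end (wG e eG) eu) (mkedge_other_end (wG f fG) fu) E.
Qed.

Lemma deg_lt_card_verts G u : wf_graph G -> u \in verts G -> deg G u < #|` verts G|.
Proof.
move=> wG uV; rewrite -card_neighbours // (cardfsD1 u (verts G)) uV add1n ltnS.
exact/fsubset_leq_card/neighbours_sub.
Qed.

Lemma mem_complete_fsetU1 W z e : e \in complete (z |` W) ->
  e \in complete W \/ exists2 x, x \in W & e = mkedge z x.
Proof.
rewrite !mem_complete !in_fset1U => /and3P[e1 e2 lt].
case: (eqVneq e.1 z) e1 => [e1z|_] /= e1; last first.
  case: (eqVneq e.2 z) e2 => [e2z|_] /= e2; last by left; rewrite e1 e2.
  by right; exists e.1; rewrite // -e2z mkedgeC mkedgeE.
right; exists e.2; last by rewrite -e1z mkedgeE.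
by move: e2; case: eqP => // e2z; move: lt; rewrite e1z e2z ltnn.
Qed.

Lemma mem_fan z P p : p \in P -> mkedge z p \in fan z P.
Proof. by move=> pP; apply/imfsetP; exists p. Qed.

Lemma fan_incident z P e : e \in fan z P -> incident e z.
Proof. by move=> /imfsetP[p _ ->]; apply: incident_mkedgel. Qed.

Lemma fan_sub_complete z P W : z \notin W -> P `<=` W -> fan z P `<=` complete (z |` W).
Proof.
move=> zW PW; apply/fsubsetP => e /imfsetP[p pP ->].
have pW := fsubsetP PW p pP.
by apply: mkedge_complete; rewrite ?fset1U1 ?fset1Ur //; apply: contraNneq zW => ->.
Qed.

Lemma card_fan z P : z \notin P -> #|` fan z P| = #|` P|.
Proof.
move=> zP; rewrite card_in_imfset // => p q pP qP /mkedge_eq[[_ ->]//|[zq _]].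
by move: zP; rewrite zq qP.
Qed.

Lemma split_enum_uniq (x : nat) (A V : {fset nat}) : x \notin A ->
  uniq (x :: enum_fset A ++ enum_fset (V `\` (x |` A))).
Proof.
move=> xA; rewrite /= mem_cat negb_or xA in_fsetD fset1U1 cat_uniq !fset_uniq /= andbT.
by apply/hasPn => y; rewrite in_fsetD in_fset1U negb_or => /andP[/andP[_ ->]].
Qed.

Lemma size_split_enum (x : nat) (A V : {fset nat}) : x \in V -> A `<=` V `\ x ->
  size (x :: enum_fset A ++ enum_fset (V `\` (x |` A))) = #|` V|.
Proof.
move=> xV AV; have xA : x \notin A by apply/negP => /(fsubsetP AV); rewrite fsetD11.
have xAV : x |` A `<=` V by rewrite fsubUset fsub1set xV (fsubset_trans AV (fsubD1set _ _)).
have := fsubset_leq_card xAV; rewrite /= size_cat cardfsDS // cardfsU1 xA /=.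
lia.
Qed.

Lemma gmap_fsetD1 f C e : injective f -> wf_graph C -> e \in C ->
  gmap f (C `\ e) = gmap f C `\ emap f e.
Proof.
move=> fi wC eC; apply/fsetP => x; rewrite in_fsetD1; apply/imfsetP/andP.
  move=> [e']; rewrite in_fsetD1 => /andP[e'e e'C] ->; split; last exact: in_imfset.
  by apply: contra e'e => /eqP/(emap_inj fi (wC _ e'C) (wC _ eC))->.
move=> [xe /imfsetP[e' e'C xE]]; exists e' => //; rewrite in_fsetD1 e'C andbT.
by apply: contraNneq xe => e'E; rewrite xE e'E.
Qed.

Lemma circuit_copy_spans M f C e Y : injective f -> is_circuit M C -> e \in C ->
  wf_graph (emap f e |` Y) -> gmap f C `<=` emap f e |` Y -> r M (emap f e |` Y) = r M Y.
Proof.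
move=> fi [wC [rC rCe]] eC w sub.
have wC' : wf_graph (gmap f C) := wf_graph_sub w sub.
have feC : emap f e \in gmap f C by apply: in_imfset.
apply: (r_spanned_mono w (Y := gmap f C `\ emap f e)); first by rewrite fsubDset.
rewrite fsetD1K //; apply/eqP; rewrite eqn_leq (r_mono M wC' (fsubD1set _ _)) andbT.
have wCe : wf_graph (C `\ e) := wf_graph_sub wC (fsubD1set C e).
rewrite -gmap_fsetD1 // /r !(mrk_iso M fi) ?fsubset_refl //.
by move: rC (rCe e eC); rewrite /r; lia.
Qed.

Section Threshold.
Variables (M : graph_matroid_family) (d t : nat) (C0 : graph) (c : nat).
Hypotheses (circuit_mindeg : forall C, is_circuit M C -> mindeg_ge C d.+1)
  (C0_circuit : is_circuit M C0) (C0_deg : deg C0 c = d.+1)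
  (C0_verts : (#|` verts C0|).-1 = t).
Notation rk := (r M).

Let wC0 : wf_graph C0. Proof. by case: C0_circuit. Qed.

Let c_in_C0 : c \in verts C0.
Proof.
have : star C0 c != fset0 by rewrite -cardfs_gt0 card_star C0_deg.
by case/fset0Pn => e; rewrite mem_star => /andP[eC ec]; apply: verts_incident eC ec.
Qed.

Lemma dim_lt_threshold : d < t.
Proof. by have := deg_lt_card_verts wC0 c_in_C0; rewrite C0_deg; lia. Qed.

Section Embedding.
Variables (W P : {fset nat}) (z w : nat).
Hypotheses (zW : z \notin W) (PW : P `<=` W) (card_P : #|` P| = d)
  (wW : w \in W) (wP : w \notin P) (tW : t <= #|` W|).

Let z_neq x : x \in W -> z != x.
Proof. by apply: contraTneq => <-. Qed.

Lemma circuit_embedding : exists2 f : nat -> nat, injective f &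
  [/\ f c = z, {in neighbours C0 c, forall x, f x \in w |` P},
      exists2 n0, n0 \in neighbours C0 c & f n0 = w
    & {in verts C0 `\ c, forall x, f x \in W}].
Proof.
set N := neighbours C0 c; set R := verts C0 `\` (c |` N).
set Q := w |` P; set rest := (z |` W) `\` (z |` Q).
have NV : N `<=` verts C0 `\ c := neighbours_sub c wC0.
have cN : c \notin N by apply/negP => /(fsubsetP NV); rewrite fsetD11.
have QW : Q `<=` (z |` W) `\ z.
  apply/fsubsetP => x xQ; rewrite in_fsetD1 in_fset1U.
  have xW : x \in W by move: xQ; rewrite in_fset1U => /orP[/eqP->|/(fsubsetP PW)].
  by rewrite xW orbT eq_sym z_neq.
have zQ : z \notin Q by apply/negP => /(fsubsetP QW); rewrite fsetD11.
(* Align c, its neighbours and the rest of C0 with z, w |` P and the rest of W. *)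
have [|f fi fs] := @exists_inj_extension (c :: enum_fset N ++ enum_fset R)
  (z :: enum_fset Q ++ enum_fset rest) (split_enum_uniq _ cN) (split_enum_uniq _ zQ).
  by rewrite !size_split_enum ?fset1U1 // cardfsU1 zW; lia.
have sNQ : size (enum_fset N) = size (enum_fset Q).
  by rewrite card_neighbours // C0_deg cardfsU1 wP card_P.
move: fs => /= [fc]; rewrite map_cat size_cat take_cat -sNQ ltnNge leq_addr /= addKn.
move=> /eqP; rewrite eqseq_cat ?size_map // => /andP[/eqP fN /eqP fR].
have fNQ : {in N, forall x, f x \in Q}.
  move=> x xN; have : f x \in map f (enum_fset N) by apply: map_f.
  by rewrite fN.
exists f => //; split => //.
  have /mapP[n0 n0N w_fn0] : w \in map f (enum_fset N) by rewrite fN fset1U1.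
  by exists n0.
move=> x xV; have [/fNQ/(fsubsetP QW)|xN] := boolP (x \in N).
  by rewrite in_fsetD1 in_fset1U => /andP[/negbTE->].
have : f x \in map f (enum_fset R).
  by apply: map_f; move: xV; rewrite !in_fsetD1 in_fsetD in_fset1U negb_or xN andbT.
by rewrite fR => /mem_take; rewrite !in_fsetD !in_fset1U negb_or => /andP[/andP[/negbTE->]].
Qed.

Lemma circuit_copy_in_fan : exists f e0, [/\ injective f, e0 \in C0,
  emap f e0 = mkedge z w & gmap f C0 `<=` mkedge z w |` (complete W `|` fan z P)].
Proof.
have [f fi [fc fN [n0 n0N fn0] fV]] := circuit_embedding.
have /imfsetP[e0 e0S n0E] := n0N; move: e0S; rewrite mem_star => /andP[e0C e0c].
exists f, e0; split; rewrite ?(emap_incident f e0c) ?fc -?n0E ?fn0 //.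
apply/fsubsetP => _ /imfsetP[e eC ->]; case: (boolP (incident e c)) => ec.
  have oN : other_end c e \in neighbours C0 c by apply/imfsetP; exists e; rewrite ?mem_star ?eC.
  rewrite (emap_incident f ec) fc; case/fset1UP: (fN _ oN) => [->|fP].
    exact: fset1U1.
  by rewrite fset1Ur // in_fsetU mem_fan ?orbT.
move: ec; rewrite /incident negb_or => /andP[e1c e2c].
have lt : e.1 < e.2 by apply: wC0.
rewrite fset1Ur // in_fsetU /emap mkedge_complete ?fV //;
  rewrite ?in_fsetD1 ?e1c ?e2c ?(verts_incident eC) ?/incident ?eqxx ?orbT //.
by apply: contraTneq lt => /fi->; rewrite ltnn.
Qed.

Lemma fan_edge_spanned :
  rk (mkedge z w |` (complete W `|` fan z P)) = rk (complete W `|` fan z P).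
Proof.
have [f [e0 [fi e0C fe0 sub]]] := circuit_copy_in_fan.
rewrite -fe0; apply: circuit_copy_spans fi C0_circuit e0C _ _; rewrite fe0 //.
refine (wf_graph_sub (@wf_complete (z |` W)) _).
rewrite fsubUset fsub1set fsubUset fan_sub_complete // complete_sub ?fsubsetU1 // !andbT.
by apply: mkedge_complete; rewrite ?fset1U1 ?fset1Ur ?z_neq.
Qed.

End Embedding.

Lemma r_complete_add_vertex_ge W z : z \notin W -> d <= #|` W| ->
  rk (complete W) + d <= rk (complete (z |` W)).
Proof.
move=> zW dW; have [P PW cP] := exists_fsubset_card dW.
have zP : z \notin P by apply: contra zW => /(fsubsetP PW).
have sub : complete W `|` fan z P `<=` complete (z |` W).
  by rewrite fsubUset fan_sub_complete // complete_sub ?fsubsetU1.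
have zK : z \notin verts (complete W) by apply: contra zW => /(fsubsetP (verts_complete W)).
have := r_add_star circuit_mindeg (wf_graph_sub (@wf_complete _) sub) zK (@fan_incident z P).
rewrite card_fan // cP minnn => h.
exact: leq_trans h (r_mono M (@wf_complete _) sub).
Qed.

Lemma r_complete_add_vertex_le W z : z \notin W -> t <= #|` W| ->
  rk (complete (z |` W)) <= rk (complete W) + d.
Proof.
move=> zW tW; have [P PW cP] := exists_fsubset_card (leq_trans (ltnW dim_lt_threshold) tW).
have zP : z \notin P by apply: contra zW => /(fsubsetP PW).
set Y := complete W `|` fan z P.
have wYK : wf_graph (Y `|` complete (z |` W)).
  refine (wf_graph_sub (@wf_complete (z |` W)) _).
  by rewrite !fsubUset fan_sub_complete // complete_sub ?fsubsetU1 ?fsubset_refl.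
have wY : wf_graph Y := wf_graph_sub wYK (fsubsetUl _ _).
have spanned : rk (Y `|` complete (z |` W)) = rk Y.
  apply: r_spanned_fsetU => // e /mem_complete_fsetU1[eK|[x xW ->]].
    by rewrite (fsetUidPr _ _ _) // fsub1set in_fsetU eK.
  have [xP|xP] := boolP (x \in P); last exact: fan_edge_spanned.
  by rewrite (fsetUidPr _ _ _) // fsub1set in_fsetU mem_fan ?orbT.
apply: leq_trans (r_mono M wYK (fsubsetUr _ _)) _.
rewrite spanned -cP -(card_fan zP).
rewrite /Y; apply: r_fsetU_le_card; first exact: wf_complete.
exact: wf_graph_sub wY (fsubsetUr _ _).
Qed.

Lemma r_complete_add_vertex W z : z \notin W -> t <= #|` W| ->
  rk (complete (z |` W)) = rk (complete W) + d.
Proof.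
move=> zW tW; apply/eqP; rewrite eqn_leq r_complete_add_vertex_le //.
by rewrite r_complete_add_vertex_ge // (leq_trans (ltnW dim_lt_threshold)).
Qed.

Lemma Kn_succ n : Kn n.+1 = complete (n |` [fset i in iota 0 n]).
Proof.
congr complete; apply/fsetP => i.
by rewrite in_fset1U !in_fset !mem_iota /= !add0n ltnS leq_eqVlt.
Qed.

Lemma dim_gt0 : unbounded M -> 0 < d.
Proof.
move=> unb; rewrite lt0n; apply/negP => /eqP d0.
have Kn_sub m n : m <= n -> Kn m `<=` Kn n.
  move=> mn; apply: complete_sub; apply/fsubsetP => i; rewrite !in_fset !mem_iota /=.
  by move=> im; rewrite (leq_trans im mn).
have wKn n : wf_graph (Kn n) := @wf_complete _.
have bounded n : rk (Kn n) <= rk (Kn t).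
  elim: n => [|n IH]; first by apply: r_mono (wKn t) _; apply: Kn_sub.
  have [tn|nt] := leqP t n; last by apply: r_mono (wKn t) _; apply: Kn_sub.
  rewrite Kn_succ r_complete_add_vertex ?d0 ?addn0 //.
    by rewrite in_fset mem_iota /= ltnn.
  by rewrite card_fseq undup_id ?iota_uniq // size_iota.
by have [n] := unb (rk (Kn t)).+1; have := bounded n; lia.
Qed.

End Threshold.

(** * Vertex redundancy and vertical connectivity *)

Lemma neighbour_edge G z x : wf_graph G -> x \in neighbours G z -> mkedge z x \in star G z.
Proof.
move=> wG /imfsetP[e eS ->]; move: (eS); rewrite mem_star => /andP[eG ez].
by rewrite -mkedge_other_end // wG.
Qed.

Lemma deg_del_neighbours G z N : wf_graph G -> N `<=` neighbours G z ->
  deg (del G N) z + #|` N| <= deg G z.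
Proof.
move=> wG NN; have zN : z \notin N.
  by apply/negP => /(fsubsetP NN) /(fsubsetP (neighbours_sub z wG)); rewrite fsetD11.
rewrite -!card_star -(card_fan zN) -cardfsUI.
have -> : star (del G N) z `&` fan z N = fset0.
  apply/eqP; rewrite fsetI_eq0; apply/fdisjointP => e; rewrite mem_star mem_del.
  case/andP => /and3P[_ e1 e2] _; apply/negP => /imfsetP[x xN ex].
  by move: e1 e2; rewrite ex /mkedge; case: leqP => _ /=; rewrite xN ?andbF.
rewrite cardfs0 addn0; apply: fsubset_leq_card; rewrite fsubUset; apply/andP; split.
  by apply/fsubsetP => e; rewrite !mem_star mem_del => /andP[/andP[-> _] ->].
by apply/fsubsetP => _ /imfsetP[x /(fsubsetP NN) xN ->]; apply: neighbour_edge.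
Qed.

Section VertexRedundancy.
Variables (M : graph_matroid_family) (d : nat).
Hypotheses (circuit_mindeg : forall C, is_circuit M C -> mindeg_ge C d.+1) (d_gt0 : 0 < d).
Notation rk := (r M).

Lemma rigid_deg_ge H W z : wf_graph H -> verts H `<=` W -> rk (complete W) <= rk H ->
  z \in W -> d < #|` W| -> d <= deg H z.
Proof.
move=> wH HW rH zW dW.
have wHS : wf_graph (H `\` star H z) := wf_graph_sub wH (fsubsetDl _ _).
have split_star : rk H <= rk (H `\` star H z) + deg H z.
  have := r_fsetU_le_card M wHS (wf_graph_sub wH (star_sub H z)).
  by rewrite fsetUC fsetUDl fsetDv fsetD0 (fsetUidPr _ _ (star_sub H z)).
have rest_in_K : rk (H `\` star H z) <= rk (complete (W `\ z)).
  apply: (r_mono M (@wf_complete _)); apply/fsubsetP => e.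
  rewrite in_fsetD mem_star /incident negb_and negb_or => /andP[+ eH].
  rewrite eH /= => /andP[e1 e2].
  rewrite mem_complete !in_fsetD1 e1 e2 (wH _ eH) !(fsubsetP HW) //;
    by apply: verts_incident eH _; rewrite /incident eqxx ?orbT.
have dWz : d <= #|` W `\ z| by move: dW; rewrite (cardfsD1 z W) zW.
have := r_complete_add_vertex_ge circuit_mindeg (negbT (fsetD11 z W)) dWz.
by rewrite fsetD1K //; lia.
Qed.

Lemma vredundant_deg_ge G k z : wf_graph G ->
  (forall X, X `<=` verts G -> #|` X| <= k -> rigid_on M (verts G `\` X) (del G X)) ->
  d + k < #|` verts G| -> z \in verts G -> d + k <= deg G z.
Proof.
move=> wG vr size_G zV.
(* Deleting min(k, deg z) neighbours of z leaves a rigid graph, in which deg z >= d. *)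
have [|N NN cN] := @exists_fsubset_card _ (neighbours G z) (minn k (deg G z)).
  by rewrite card_neighbours // geq_minr.
have NV : N `<=` verts G.
  exact: fsubset_trans NN (fsubset_trans (neighbours_sub z wG) (fsubD1set _ _)).
have zN : z \notin N.
  by apply/negP => /(fsubsetP NN) /(fsubsetP (neighbours_sub z wG)); rewrite fsetD11.
have rigid_GN : rigid_on M (verts G `\` N) (del G N).
  by apply: vr NV _; rewrite cN geq_minl.
have d_le : d <= deg (del G N) z.
  apply: (rigid_deg_ge (wf_graph_sub wG (del_sub G N)) (verts_del G N)).
  - by rewrite rigid_GN.
  - by rewrite in_fsetD zN zV.
  - by rewrite cardfsDS //; have := geq_minl k (deg G z); lia.
by have := deg_del_neighbours wG NN; rewrite cN; lia.
Qed.

End VertexRedundancy.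

Lemma k_connected_del1 G k z : k_connected G k.+1 -> z \in verts G ->
  verts (del G [fset z]) = verts G `\ z -> k_connected (del G [fset z]) k.
Proof.
case=> size_G conn zV vG'; split; first by move: size_G; rewrite vG' (cardfsD1 z (verts G)) zV.
move=> X; rewrite vG' fsetDDl del_del1 => XV cX; apply: conn; last by rewrite cardfsU1; lia.
by rewrite fsubUset fsub1set zV (fsubset_trans XV (fsubD1set _ _)).
Qed.

Lemma vredundantly_rigid_del1 M G k z : vredundantly_rigid M G k.+1 -> z \in verts G ->
  verts (del G [fset z]) = verts G `\ z -> vredundantly_rigid M (del G [fset z]) k.
Proof.
case=> _ vr zV vG'; split; first by rewrite /rigid vG'; apply: vr; rewrite ?fsub1set ?cardfs1.
move=> X; rewrite vG' fsetDDl del_del1 => XV cX; apply: vr; last by rewrite cardfsU1; lia.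
by rewrite fsubUset fsub1set zV (fsubset_trans XV (fsubD1set _ _)).
Qed.

Lemma path_boundary G A x p : 0 < deg A x -> path (fun a b => mkedge a b \in G) x p ->
  0 < deg (G `\` A) (last x p) -> exists z, 0 < deg A z /\ 0 < deg (G `\` A) z.
Proof.
elim: p x => [|y p IH] x /=; first by move=> degA _ degB; exists x.
move=> degA /andP[xy yp] degB; have [xyA|xyA] := boolP (mkedge x y \in A).
  by apply: IH yp degB; apply/deg_gt0P; exists (mkedge x y); rewrite ?incident_mkedger.
exists x; split=> //; apply/deg_gt0P; exists (mkedge x y); rewrite ?incident_mkedgel //.
by rewrite in_fsetD xyA.
Qed.

Lemma boundary_vertex G A a b : connected_on (verts G) G -> A `<=` G ->
  a \in A -> b \in G `\` A -> exists z, 0 < deg A z /\ 0 < deg (G `\` A) z.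
Proof.
move=> conn sA aA bB; have bG : b \in G by move: bB; rewrite in_fsetD => /andP[].
have [p /andP[ap /eqP pb]] :=
  conn a.1 b.1 (verts_incident (fsubsetP sA a aA) (incident1 a)) (verts_incident bG (incident1 b)).
apply: path_boundary ap _; first by apply/deg_gt0P; exists a; rewrite ?incident1.
by apply/deg_gt0P; exists b; rewrite ?pb ?incident1.
Qed.

Lemma not_vertical_sep M G k k' E1 E2 : wf_graph G ->
  (forall A, A `<=` G -> minn k (minn (r M A) (r M (G `\` A))) + r M G <= r M A + r M (G `\` A)) ->
  0 < k' -> k' <= k -> ~ vertical_sep M G k' E1 E2.
Proof.
move=> wG ineq k'0 k'k [GE dj h1 h2 h3]; change (mrk M G G) with (r M G) in h3.
have s1 : E1 `<=` G by rewrite -GE fsubsetUl.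
have E2E : E2 = G `\` E1.
  apply/fsetP => e; rewrite -GE in_fsetD in_fsetU; move/fsetP: dj => /(_ e).
  by rewrite in_fsetI in_fset0; case: (e \in E1); case: (e \in E2).
have s2 : E2 `<=` G by rewrite -GE fsubsetUr.
rewrite -(r_restr M wG s1) -(r_restr M wG s2) in h1 h2 h3.
by have := ineq E1 s1; rewrite -E2E; lia.
Qed.

Section VerticalConnectivity.
Variables (M : graph_matroid_family) (d t : nat).
Hypotheses (circuit_mindeg : forall C, is_circuit M C -> mindeg_ge C d.+1)
  (d_gt0 : 0 < d) (d_lt_t : d < t)
  (complete_step : forall W z, z \notin W -> t <= #|` W| ->
     r M (complete (z |` W)) = r M (complete W) + d).
Notation rk := (r M).

Lemma r_del1_rigid G z : rigid M G -> rigid_on M (verts G `\ z) (del G [fset z]) ->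
  z \in verts G -> t < #|` verts G| -> rk G = rk (del G [fset z]) + d.
Proof.
move=> rG rG' zV tV; rewrite rG rG' -(@complete_step _ z) ?fsetD1K ?fsetD11 //.
by move: tV; rewrite (cardfsD1 z (verts G)) zV.
Qed.

Lemma vertical_rank_ineq k G : wf_graph G -> k_connected G k -> vredundantly_rigid M G k ->
  k + t <= #|` verts G| -> forall A, A `<=` G ->
  minn k (minn (rk A) (rk (G `\` A))) + rk G <= rk A + rk (G `\` A).
Proof.
elim: k G => [|k IH] G wG kc vr size_G A sA.
  by rewrite min0n add0n; apply: r_le_add_fsetD.
have triv := r_le_add_fsetD M wG sA.
have [A0|[a aA]] := fset_0Vmem A; first by rewrite A0 r_fset0 min0n fsetD0.
have [B0|[b bB]] := fset_0Vmem (G `\` A); first by move: triv; rewrite B0 r_fset0 !minn0 add0n.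
have conn : connected_on (verts G) G.
  by case: kc => _ /(_ fset0); rewrite fsetD0 del0; apply; rewrite ?fsub0set ?cardfs0.
have [z [degA degB]] := boundary_vertex conn sA aA bB.
have zV : z \in verts G.
  by case/deg_gt0P: degA => e eA ez; apply: verts_incident (fsubsetP sA e eA) ez.
case: (vr) => rG vr_del.
have deg_ge u : u \in verts G -> d + k.+1 <= deg G u.
  by move=> uV; apply: (vredundant_deg_ge circuit_mindeg d_gt0 wG vr_del _ uV); lia.
have vG' : verts (del G [fset z]) = verts G `\ z by apply: verts_del1 => // u /deg_ge; lia.
have size_G' : k + t <= #|` verts (del G [fset z])|.
  by move: size_G; rewrite vG' (cardfsD1 z (verts G)) zV; lia.
have IH' := IH _ (wf_graph_sub wG (del_sub _ _)) (k_connected_del1 kc zV vG')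
  (vredundantly_rigid_del1 vr zV vG') size_G' _ (del_fsubset [fset z] sA).
rewrite -del_fsetD in IH'.
have rGz : rigid_on M (verts G `\ z) (del G [fset z]) by apply: vr_del; rewrite ?fsub1set ?cardfs1.
have rG_del := r_del1_rigid rG rGz zV ltac:(lia).
have wA := wf_graph_sub wG sA; have wB := wf_graph_sub wG (fsubsetDl G A).
have rA_del := r_del1_star circuit_mindeg z wA; have rB_del := r_del1_star circuit_mindeg z wB.
have rA_deg := r_ge_deg circuit_mindeg d_gt0 z wA.
have rB_deg := r_ge_deg circuit_mindeg d_gt0 z wB.
(* Deleting z costs G exactly d, but costs A and G - A together at least d + 1:
   z has edges on both sides and more than d edges in all. *)
have := deg_le_split G A z; have := deg_ge z zV.
lia.
Qed.

End VerticalConnectivity.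

Theorem proposition3p6 (M : graph_matroid_family) (G : graph) (k d t : nat) :
  wf_graph G ->
  nontrivial M -> unbounded M ->
  is_dimensionality M d -> is_threshold M d t ->
  k_connected G k -> vredundantly_rigid M G k ->
  k + t <= #|` verts G | ->
  vertically_connected M G k.+1.
Proof.
(* Nontriviality only serves to make [d] and [t] exist; here they are given. *)
move=> wG _ unb [_ circuit_mindeg] [[C0 [C0_circuit [_ [c _ C0_deg]] C0_verts]] _] kc vr size_G.
have d_lt_t := dim_lt_threshold C0_circuit C0_deg C0_verts.
have d_gt0 := dim_gt0 circuit_mindeg C0_circuit C0_deg C0_verts unb.
have step := r_complete_add_vertex circuit_mindeg C0_circuit C0_deg C0_verts.
split.
  have [z zV] : exists z, z \in verts G.
    by apply/fset0Pn; rewrite -cardfs_gt0; case: kc => /(leq_ltn_trans (leq0n k)).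
  apply: leq_trans (r_ge_deg circuit_mindeg d_gt0 z wG).
  have := vredundant_deg_ge circuit_mindeg d_gt0 wG vr.2 _ zV; lia.
move=> k' k'0 k'k E1 E2; apply: (not_vertical_sep wG _ k'0 k'k).
exact: vertical_rank_ineq circuit_mindeg d_gt0 d_lt_t step k G wG kc vr size_G.
Qed.
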